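(* Let $f\in{\rm elh}(\mathbb{C})$ be non-polynomial and $g\in{\rm elh}(\mathbb{C})$, suppose there is $h_1\in{\rm elh}(\mathbb{C})$ with $h_1\neq g$ and $f\circ h_1=f\circ g$, and let $t(z),h(z),L(w)$ be entire functions with $f(g(z)+we^{t(z)})=f(g(z))+e^{L(w)+h(z)}\sin\pi w$ for all $(z,w)\in\mathbb{C}^2$. Then for all $(z,w)\in\mathbb{C}^2$, $$(t'(z)-h'(z))f'(g(z)+we^{t(z)})+(g'(z)+wt'(z)e^{t(z)})f''(g(z)+we^{t(z)})=0.$$
   Context: ${\rm elh}(\mathbb{C})$ denotes the set of entire functions with nowhere vanishing derivative and derivative $1$ at $0$. *)

From Stdlib Require Import Reals.
From Coquelicot Require Import Coquelicot.
Open Scope C_scope.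

Definition cderiv (f : C -> C) (z : C) (l : C) : Prop :=
  @is_derive C_AbsRing C_NormedModule f z l.

Definition entire (f : C -> C) : Prop := forall z : C, exists l : C, cderiv f z l.

Definition elh (f : C -> C) : Prop :=
  exists f' : C -> C, (forall z, cderiv f z (f' z)) /\
    (forall z, f' z <> 0) /\ f' 0 = 1.

Definition is_polynomial (f : C -> C) : Prop :=
  exists (n : nat) (a : nat -> C),
    forall z : C, f z = sum_n (fun k => a k * pow_n z k) n.

Definition cexp (z : C) : C :=
  (exp (Re z) * cos (Im z), exp (Re z) * sin (Im z))%R.

Definition csin (z : C) : C :=
  (cexp (Ci * z) - cexp (- (Ci * z))) / (2 * Ci).

(* Differentiate the functional equation in z: the factor e^{L(w)+h(z)} sin(pi w) reproduces
   itself times h'(z), and by the equation that product is f(g(z) + w e^{t(z)}) - f(g(z)).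
   Differentiating the resulting identity in w yields e^{t(z)} times the claimed expression,
   and e^{t(z)} never vanishes. *)

From Stdlib Require Import Reals Lra.
From Coquelicot Require Import Coquelicot.

Open Scope R_scope.

Lemma derivable_pt_lim_0_bound (f : R -> R) (l : R) :
  derivable_pt_lim f 0 l -> forall e, 0 < e ->
  exists d, 0 < d /\ forall x, Rabs x < d -> Rabs (f x - f 0 - l * x) <= e * Rabs x.
Proof.
intros Hf e He. destruct (Hf e He) as [d Hd]. exists d. split; [apply cond_pos|].
intros x Hx. destruct (Req_dec x 0) as [->|Hx0].
- replace (f 0 - f 0 - l * 0) with 0 by ring. rewrite Rabs_R0. lra.
- specialize (Hd x Hx0 Hx). rewrite Rplus_0_l in Hd.
  replace ((f x - f 0) / x - l) with ((f x - f 0 - l * x) / x) in Hd by (field; exact Hx0).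
  unfold Rdiv in Hd. rewrite Rabs_mult, Rabs_inv in Hd.
  assert (Hpos : 0 < Rabs x) by (apply Rabs_pos_lt; exact Hx0).
  apply Rmult_lt_compat_r with (r := Rabs x) in Hd; [|exact Hpos].
  rewrite Rmult_assoc, Rinv_l in Hd by lra. lra.
Qed.

Lemma exp_sin_cos_linear_approx (e : R) : 0 < e -> exists d, 0 < d /\
  forall a b, Rabs a < d -> Rabs b < d ->
  Rabs (exp a - 1 - a) <= e * Rabs a /\ Rabs (sin b - b) <= e * Rabs b /\
  Rabs (cos b - 1) <= e * Rabs b.
Proof.
intros He.
destruct (derivable_pt_lim_0_bound _ _ derivable_pt_lim_exp_0 e He) as [d1 [Hd1 Hexp]].
destruct (derivable_pt_lim_0_bound _ _ derivable_pt_lim_sin_0 e He) as [d2 [Hd2 Hsin]].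
destruct (derivable_pt_lim_0_bound _ _ derivable_pt_lim_cos_0 e He) as [d3 [Hd3 Hcos]].
rewrite exp_0 in Hexp. rewrite sin_0 in Hsin. rewrite cos_0 in Hcos.
exists (Rmin d1 (Rmin d2 d3)).
split; [apply Rmin_pos; [|apply Rmin_pos]; assumption|].
intros a b Ha Hb.
pose proof (Rmin_l d1 (Rmin d2 d3)). pose proof (Rmin_r d1 (Rmin d2 d3)).
pose proof (Rmin_l d2 d3). pose proof (Rmin_r d2 d3).
specialize (Hexp a ltac:(lra)). specialize (Hsin b ltac:(lra)). specialize (Hcos b ltac:(lra)).
repeat split.
- replace (exp a - 1 - a) with (exp a - 1 - 1 * a) by ring. exact Hexp.
- replace (sin b - b) with (sin b - 0 - 1 * b) by ring. exact Hsin.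
- replace (cos b - 1) with (cos b - 1 - 0 * b) by ring. exact Hcos.
Qed.

Open Scope C_scope.

Notation C_AbsRing_NormedModule := (AbsRing_NormedModule C_AbsRing).

Lemma Cmod_le_Rabs_sum (z : C) : (Cmod z <= Rabs (Re z) + Rabs (Im z))%R.
Proof.
destruct z as [a b]. change (Cmod (a, b) <= Rabs a + Rabs b)%R.
replace (a, b) with (RtoC a + (0, b)%R) by (unfold RtoC, Cplus; simpl; f_equal; ring).
eapply Rle_trans; [apply Cmod_triangle|]. rewrite Cmod_R. simpl.
unfold Cmod; simpl.
replace (0 * (0 * 1) + b * (b * 1))%R with (Rsqr b) by (unfold Rsqr; ring).
rewrite sqrt_Rsqr_abs. lra.
Qed.

Lemma Rabs_components_le_Cmod (a b : R) :
  (Rabs a <= Cmod (a, b))%R /\ (Rabs b <= Cmod (a, b))%R.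
Proof.
pose proof (re_le_Cmod (a, b)). pose proof (Rmax_Cmod (a, b)).
pose proof (Rmax_r (Rabs a) (Rabs b)). simpl in *. lra.
Qed.

Lemma Cmult_eq_0_nonzero_l (a x : C) : a <> 0 -> a * x = 0 -> x = 0.
Proof. intros Ha Hax. replace x with (/ a * (a * x)) by (field; exact Ha). rewrite Hax. ring. Qed.

Lemma cexp_0 : cexp 0 = 1.
Proof. unfold cexp, RtoC; simpl. rewrite exp_0, cos_0, sin_0. f_equal; ring. Qed.

Lemma cexp_add (x y : C) : cexp (x + y) = cexp x * cexp y.
Proof.
destruct x as [a b], y as [c d]. unfold cexp, Cplus, Cmult; simpl.
rewrite exp_plus, cos_plus, sin_plus. f_equal; ring.
Qed.

Lemma cexp_neq0 (x : C) : cexp x <> 0.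
Proof.
destruct x as [a b]. unfold cexp, RtoC; simpl. intros H. injection H. intros Hsin Hcos.
pose proof (exp_pos a). pose proof (sin2_cos2 b). unfold Rsqr in *.
apply Rmult_integral in Hsin. apply Rmult_integral in Hcos.
destruct Hsin as [|Hsin]; [lra|]. destruct Hcos as [|Hcos]; [lra|].
rewrite Hsin, Hcos in *. lra.
Qed.

(* [e <= 1/2] and [|a| <= e] keep [exp a] below 2, which absorbs the cross terms. *)
Lemma cexp_remainder_bound (a b e : R) :
  (0 < e <= 1/2)%R -> (Rabs a <= e)%R ->
  (Rabs (exp a - 1 - a) <= e * Rabs a)%R -> (Rabs (sin b - b) <= e * Rabs b)%R ->
  (Rabs (cos b - 1) <= e * Rabs b)%R ->
  (Cmod (cexp (a, b) - 1 - (a, b)) <= 7 * e * Cmod (a, b))%R.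
Proof.
intros He Hae Hexp Hsin Hcos.
destruct (Rabs_components_le_Cmod a b) as [Ca Cb].
pose proof (Rabs_pos a). pose proof (Rabs_pos b).
eapply Rle_trans; [apply Cmod_le_Rabs_sum|].
unfold cexp, Cminus, Cplus, Copp, RtoC; simpl.
assert (Hexp1 : (Rabs (exp a - 1) <= (1 + e) * Rabs a)%R).
{ replace (exp a - 1)%R with ((exp a - 1 - a) + a)%R by ring.
  eapply Rle_trans; [apply Rabs_triang|]. lra. }
assert (Hexp2 : (Rabs (exp a) <= 2)%R).
{ replace (exp a) with ((exp a - 1) + 1)%R by ring.
  eapply Rle_trans; [apply Rabs_triang|]. rewrite Rabs_R1. nra. }
assert (Hsin2 : (Rabs (sin b) <= 2 * Rabs b)%R).
{ replace (sin b) with ((sin b - b) + b)%R by ring.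
  eapply Rle_trans; [apply Rabs_triang|]. nra. }
assert (Hre : (Rabs (exp a * cos b + - (1) + - a) <= e * Rabs a + 2 * e * Rabs b)%R).
{ replace (exp a * cos b + - (1) + - a)%R with ((exp a - 1 - a) + exp a * (cos b - 1))%R by ring.
  eapply Rle_trans; [apply Rabs_triang|]. rewrite Rabs_mult.
  assert (Rabs (exp a) * Rabs (cos b - 1) <= 2 * (e * Rabs b))%R
    by (apply Rmult_le_compat; auto using Rabs_pos).
  lra. }
assert (Him : (Rabs (exp a * sin b + - 0 + - b) <= 4 * e * Rabs b)%R).
{ replace (exp a * sin b + - 0 + - b)%R with ((exp a - 1) * sin b + (sin b - b))%R by ring.
  eapply Rle_trans; [apply Rabs_triang|]. rewrite Rabs_mult.
  assert (Rabs (exp a - 1) * Rabs (sin b) <= ((1 + e) * Rabs a) * (2 * Rabs b))%R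
    by (apply Rmult_le_compat; auto using Rabs_pos).
  assert ((1 + e) * Rabs a <= 3 / 2 * e)%R by nra.
  assert (((1 + e) * Rabs a) * (2 * Rabs b) <= (3 / 2 * e) * (2 * Rabs b))%R
    by (apply Rmult_le_compat_r; lra).
  lra. }
assert (e * Rabs a <= e * Cmod (a, b))%R by (apply Rmult_le_compat_l; lra).
assert (e * Rabs b <= e * Cmod (a, b))%R by (apply Rmult_le_compat_l; lra).
lra.
Qed.

Lemma cderiv_cexp_0 : cderiv cexp 0 1.
Proof.
split; [apply is_linear_scal_l|].
intros x Hx.
apply (@is_filter_lim_locally_unique C_AbsRing C_AbsRing_NormedModule) in Hx.
subst x. intros eps.
set (e := Rmin (eps / 7) (1 / 2)).
assert (He : (0 < e)%R) by (apply Rmin_pos; [pose proof (cond_pos eps)|]; lra).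
assert (He7 : (e <= eps / 7)%R) by apply Rmin_l.
assert (He2 : (e <= 1 / 2)%R) by apply Rmin_r.
destruct (exp_sin_cos_linear_approx e He) as [d0 [Hd0 Happrox]].
assert (Hd : (0 < Rmin d0 e)%R) by (apply Rmin_pos; assumption).
exists (mkposreal _ Hd).
pose proof (Rmin_l d0 e). pose proof (Rmin_r d0 e). intros [a b] Hab.
change (Cmod ((a, b) - 0) < Rmin d0 e)%R in Hab.
change (Cmod ((cexp (a, b) - cexp 0) - ((a, b) - 0) * 1) <= eps * Cmod ((a, b) - 0))%R.
replace ((a, b) - 0) with (a, b) in * by (unfold Cminus, Cplus, Copp; simpl; f_equal; ring).
replace ((cexp (a, b) - cexp 0) - (a, b) * 1) with (cexp (a, b) - 1 - (a, b))
  by (rewrite cexp_0; ring).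
destruct (Rabs_components_le_Cmod a b) as [Ca Cb].
destruct (Happrox a b ltac:(lra) ltac:(lra)) as [Hexp [Hsin Hcos]].
eapply Rle_trans; [apply (cexp_remainder_bound a b e); try split; (assumption || lra)|].
apply Rmult_le_compat_r; [apply Cmod_ge_0|lra].
Qed.

(* Coquelicot's product and chain rules are stated for [AbsRing_NormedModule K], whereas [cderiv]
   uses [C_NormedModule]; the two carry the same operations but are not convertible. *)
Lemma cderiv_is_derive (f : C -> C) (z l : C) :
  cderiv f z l <-> is_derive (K := C_AbsRing) (V := C_AbsRing_NormedModule) f z l.
Proof. split; intros [[] Hlim]; repeat split; assumption. Qed.

Lemma cderiv_unique (f : C -> C) (z a b : C) : cderiv f z a -> cderiv f z b -> a = b.
Proof.
intros Ha Hb. now rewrite <- (is_C_derive_unique _ _ _ Ha), (is_C_derive_unique _ _ _ Hb).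
Qed.

Lemma cderiv_ext (f g : C -> C) (z l : C) : (forall x, f x = g x) -> cderiv f z l -> cderiv g z l.
Proof. intros Efg Hf. exact (is_derive_ext f g z l Efg Hf). Qed.

Lemma cderiv_const (c z : C) : cderiv (fun _ => c) z 0.
Proof. apply cderiv_is_derive. exact (is_derive_const (V := C_AbsRing_NormedModule) c z). Qed.

Lemma cderiv_id (z : C) : cderiv (fun x => x) z 1.
Proof. apply cderiv_is_derive. exact (is_derive_id (K := C_AbsRing) z). Qed.

Lemma cderiv_plus (f g : C -> C) (z a b : C) :
  cderiv f z a -> cderiv g z b -> cderiv (fun x => f x + g x) z (a + b).
Proof.
intros Ha%cderiv_is_derive Hb%cderiv_is_derive. apply cderiv_is_derive.
exact (is_derive_plus (V := C_AbsRing_NormedModule) f g z a b Ha Hb).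
Qed.

Lemma cderiv_mult (f g : C -> C) (z a b : C) :
  cderiv f z a -> cderiv g z b -> cderiv (fun x => f x * g x) z (a * g z + f z * b).
Proof.
intros Ha%cderiv_is_derive Hb%cderiv_is_derive. apply cderiv_is_derive.
exact (is_derive_mult f g z a b Ha Hb Cmult_comm).
Qed.

Lemma cderiv_comp (f g : C -> C) (z a b : C) :
  cderiv f (g z) a -> cderiv g z b -> cderiv (fun x => f (g x)) z (b * a).
Proof.
intros Ha%cderiv_is_derive Hb%cderiv_is_derive. apply cderiv_is_derive.
exact (is_derive_comp (V := C_AbsRing_NormedModule) f g z a b Ha Hb).
Qed.

Lemma cderiv_eq (f : C -> C) (z a b : C) : cderiv f z a -> a = b -> cderiv f z b.
Proof. intros Hf <-. exact Hf. Qed.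

Lemma cderiv_affine (a b z : C) : cderiv (fun x => a + x * b) z b.
Proof.
eapply cderiv_eq.
- apply cderiv_plus; [apply cderiv_const|].
  apply (cderiv_mult (fun x => x) (fun _ => b)); [apply cderiv_id | apply cderiv_const].
- ring.
Qed.

Lemma cderiv_cexp (z : C) : cderiv cexp z (cexp z).
Proof.
assert (Hat0 : cderiv cexp (- z + z * 1) 1)
  by (replace (- z + z * 1) with (RtoC 0) by ring; exact cderiv_cexp_0).
apply (cderiv_ext (fun x => cexp z * cexp (- z + x * 1))).
- intros x. rewrite <- cexp_add. f_equal. ring.
- eapply cderiv_eq.
  + apply (cderiv_mult (fun _ => cexp z) (fun x => cexp (- z + x * 1))); [apply cderiv_const|].
    exact (cderiv_comp cexp _ z _ _ Hat0 (cderiv_affine (- z) 1 z)).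
  + ring.
Qed.

Lemma cderiv_cexp_comp (u u' : C -> C) (z : C) :
  cderiv u z (u' z) -> cderiv (fun x => cexp (u x)) z (u' z * cexp (u z)).
Proof. intros Hu. exact (cderiv_comp cexp u z _ _ (cderiv_cexp (u z)) Hu). Qed.

Section FunctionalEquation.

Variables (f f' f'' g g' t t' h h' L s : C -> C).
Hypothesis Hf' : forall z, cderiv f z (f' z).
Hypothesis Hf'' : forall z, cderiv f' z (f'' z).
Hypothesis Hg' : forall z, cderiv g z (g' z).
Hypothesis Ht' : forall z, cderiv t z (t' z).
Hypothesis Hh' : forall z, cderiv h z (h' z).
Hypothesis Hfun : forall z w : C,
  f (g z + w * cexp (t z)) = f (g z) + cexp (L w + h z) * s w.

Lemma functional_equation_deriv_z (z w : C) :
  f' (g z + w * cexp (t z)) * (g' z + w * t' z * cexp (t z))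
  = f' (g z) * g' z + h' z * (f (g z + w * cexp (t z)) - f (g z)).
Proof.
assert (Harg : cderiv (fun x => g x + w * cexp (t x)) z (g' z + w * t' z * cexp (t z))).
{ eapply cderiv_eq.
  - apply cderiv_plus; [apply Hg'|].
    apply (cderiv_mult (fun _ => w) (fun x => cexp (t x))); [apply cderiv_const|].
    apply (cderiv_cexp_comp t t'), Ht'.
  - ring. }
assert (Hexp : cderiv (fun x => cexp (L w + h x)) z (h' z * cexp (L w + h z))).
{ eapply cderiv_eq.
  - apply (cderiv_cexp_comp (fun x => L w + h x) (fun x => 0 + h' x)).
    apply cderiv_plus; [apply cderiv_const | apply Hh'].
  - ring. }
assert (Hrhs : cderiv (fun x => f (g x) + cexp (L w + h x) * s w) z
  (f' (g z) * g' z + h' z * (cexp (L w + h z) * s w))).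
{ eapply cderiv_eq.
  - apply cderiv_plus; [exact (cderiv_comp f g z _ _ (Hf' _) (Hg' z))|].
    exact (cderiv_mult _ _ z _ _ Hexp (cderiv_const (s w) z)).
  - cbv beta. ring. }
apply (cderiv_ext _ (fun x => f (g x + w * cexp (t x)))) in Hrhs;
  [|intros x; symmetry; apply Hfun].
pose proof (cderiv_unique _ _ _ _ (cderiv_comp f _ z _ _ (Hf' _) Harg) Hrhs) as Heq.
rewrite (Hfun z w). rewrite Cmult_comm, Heq. ring.
Qed.

Lemma functional_equation_deriv_zw (z w : C) :
  cexp (t z) * ((t' z - h' z) * f' (g z + w * cexp (t z))
    + (g' z + w * t' z * cexp (t z)) * f'' (g z + w * cexp (t z))) = 0.
Proof.
set (E := cexp (t z)).
pose proof (cderiv_affine (g z) E w) as Harg.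
assert (Hlhs : cderiv (fun v => f' (g z + v * E) * (g' z + v * t' z * E)) w
  (E * f'' (g z + w * E) * (g' z + w * t' z * E) + f' (g z + w * E) * (t' z * E))).
{ eapply cderiv_eq.
  - apply (cderiv_mult (fun v => f' (g z + v * E)) (fun v => g' z + v * t' z * E)).
    + exact (cderiv_comp f' _ w _ _ (Hf'' _) Harg).
    + apply (cderiv_ext (fun v => g' z + v * (t' z * E)));
        [intros v; ring | apply cderiv_affine].
  - cbv beta. ring. }
assert (Hrhs : cderiv (fun v => (f' (g z) * g' z - h' z * f (g z)) + h' z * f (g z + v * E)) w
  (h' z * (E * f' (g z + w * E)))).
{ eapply cderiv_eq.
  - apply cderiv_plus; [apply cderiv_const|].
    apply (cderiv_mult (fun _ => h' z) (fun v => f (g z + v * E))); [apply cderiv_const|].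
    exact (cderiv_comp f _ w _ _ (Hf' _) Harg).
  - cbv beta. ring. }
apply (cderiv_ext _ (fun v => f' (g z + v * E) * (g' z + v * t' z * E))) in Hrhs.
2:{ intros v. unfold E. rewrite (functional_equation_deriv_z z v). ring. }
pose proof (cderiv_unique _ _ _ _ Hlhs Hrhs) as Heq.
transitivity ((E * f'' (g z + w * E) * (g' z + w * t' z * E) + f' (g z + w * E) * (t' z * E))
  - h' z * (E * f' (g z + w * E))); [ring|].
rewrite Heq. ring.
Qed.

End FunctionalEquation.

Theorem proposition3p32
  (f g h1 t h L : C -> C)
  (Hf : elh f) (Hfnp : ~ is_polynomial f)
  (Hg : elh g)
  (Hh1 : elh h1) (Hh1g : h1 <> g) (Hfh1 : forall z, f (h1 z) = f (g z))
  (Ht : entire t) (Hh : entire h) (HL : entire L)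
  (Hfun : forall z w : C,
      f (g z + w * cexp (t z)) =
      f (g z) + cexp (L w + h z) * csin (RtoC PI * w))
  (f' f'' g' t' h' : C -> C)
  (Hf' : forall z, cderiv f z (f' z))
  (Hf'' : forall z, cderiv f' z (f'' z))
  (Hg' : forall z, cderiv g z (g' z))
  (Ht' : forall z, cderiv t z (t' z))
  (Hh' : forall z, cderiv h z (h' z)) :
  forall z w : C,
    (t' z - h' z) * f' (g z + w * cexp (t z))
    + (g' z + w * t' z * cexp (t z)) * f'' (g z + w * cexp (t z)) = 0.
Proof.
intros z w.
apply (Cmult_eq_0_nonzero_l (cexp (t z))); [apply cexp_neq0|].
exact (functional_equation_deriv_zw f f' f'' g g' t t' h h' L (fun v => csin (RtoC PI * v))
  Hf' Hf'' Hg' Ht' Hh' Hfun z w).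
Qed.
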